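(* Let $Z\subseteq(\mathbb P^1)^d$ be the common vanishing locus of the multi-homogeneous polynomials $P^h$, where $P$ ranges over all linear forms $P=\sum_{\lambda\in\Phi^+}c_\lambda x_\lambda$ with $\sum_{\lambda}c_\lambda\lambda(h)=0$ for all $h\in\mathfrak h$. For a point $x=(x_\lambda)_{\lambda\in\Phi^+}\in Z$, put $\mathrm{Fin}=\{\lambda\in\Phi^+: x_\lambda\neq\infty\}$. Then $\mathrm{Fin}\cup(-\mathrm{Fin})$ is a closed root subsystem of $\Phi$.
   Context: Let $\mathfrak g$ be a complex semisimple Lie algebra, $\mathfrak h$ a Cartan subalgebra, $r=\dim\mathfrak h$, $\Phi\subset\mathfrak h^*$ its root system, $\Phi^+$ a fixed set of positive roots, $d=|\Phi^+|$. Points of $(\mathbb P^1)^d$ are written $x=(x_\lambda)_{\lambda\in\Phi^+}$ with $x_\lambda=[x_{\lambda,0}:x_{\lambda,1}]$; $\mathbb C$ is identified with $\{x_0\neq 0\}\subset\mathbb P^1$ via $c\mapsto [1:c]$, and $\infty=[0:1]$. For a linear form $P=\sum_\lambda c_\lambda x_\lambda$ with support $\mathrm{supp}(P)=\{\lambda:c_\lambda\neq0\}$, its multi-homogenization is $P^h=\sum_{\lambda\in\mathrm{supp}P}c_\lambda x_{\lambda,1}\prod_{\mu\in\mathrm{supp}P,\mu\neq\lambda}x_{\mu,0}$. A root subsystem $\Psi\subseteq\Phi$ is closed if $\lambda,\mu\in\Psi$ and $\lambda+\mu\in\Phi$ imply $\lambda+\mu\in\Psi$. *)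

From HB Require Import structures.
From mathcomp Require Import all_boot all_order all_algebra.
Set Implicit Arguments. Unset Strict Implicit. Unset Printing Implicit Defensive.
Import Order.TTheory GRing.Theory Num.Theory.
Local Open Scope ring_scope.

Section RootSystems.
Variables (C : numClosedFieldType) (r : nat).
Local Notation V := 'rV[C]_r.

Definition pairing (b : V) (c : 'cV[C]_r) : C := (b *m c) 0 0.

Definition is_coroot (Phi : seq V) (a : V) (c : 'cV[C]_r) : Prop :=
  pairing a c = 2 /\ forall b, b \in Phi -> b - pairing b c *: a \in Phi.

(* Reduced (crystallographic) root system in h^* = C^r (Bourbaki's
   definition over a field of characteristic 0); these are exactly the
   root systems of complex semisimple Lie algebras of rank r. *)
Definition is_root_system (Phi : seq V) : Prop :=
  [/\ (0 : V) \notin Phi,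
      (<<Phi>>%VS = fullv),
      (forall a, a \in Phi -> exists c, is_coroot Phi a c /\
          forall b, b \in Phi -> exists z : int, pairing b c = z%:~R)
    & (forall a (k : C), a \in Phi -> k *: a \in Phi -> k = 1 \/ k = -1)].

Definition nat_comb (Delta : seq V) (n : 'I_(size Delta) -> nat) : V :=
  \sum_(i < size Delta) (n i)%:R *: Delta`_i.

Definition is_positive_system (Phi Phip : seq V) : Prop :=
  exists Delta : seq V,
    [/\ {subset Delta <= Phi}, free Delta,
        (forall b, b \in Phi -> exists n,
            b = @nat_comb Delta n \/ b = - @nat_comb Delta n)
      & (forall b, b \in Phip <-> (b \in Phi /\ exists n, b = @nat_comb Delta n))].

(* Points of (P^1)^d: x l = (x_{l,0}, x_{l,1}) homogeneous coordinates,
   [1:c] = c in C, [0:1] = infinity. *)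
Definition is_P1_point (Phip : seq V) (x : V -> C * C) : Prop :=
  forall l, l \in Phip -> x l != (0, 0).

(* linear forms P = sum_l c_l x_l with sum_l c_l l = 0 in h^* *)
Definition is_relation (Phip : seq V) (c : V -> C) : Prop :=
  \sum_(l <- Phip) c l *: l = 0.

(* multi-homogenization P^h evaluated at x *)
Definition homog_eval (Phip : seq V) (c : V -> C) (x : V -> C * C) : C :=
  \sum_(l <- Phip | c l != 0)
     c l * (x l).2 * \prod_(m <- Phip | (c m != 0) && (m != l)) (x m).1.

Definition in_Z (Phip : seq V) (x : V -> C * C) : Prop :=
  is_P1_point Phip x /\
  forall c, is_relation Phip c -> homog_eval Phip c x = 0.

Definition Fin (Phip : seq V) (x : V -> C * C) : seq V :=
  [seq l <- Phip | (x l).1 != 0].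

Definition closed_subset (Phi Psi : seq V) : Prop :=
  forall a b, a \in Psi -> b \in Psi -> a + b \in Phi -> a + b \in Psi.

Definition root_subsystem (Phi Psi : seq V) : Prop :=
  {subset Psi <= Phi} /\
  forall a c, a \in Psi -> is_coroot Phi a c ->
    forall b, b \in Psi -> b - pairing b c *: a \in Psi.

Definition closed_root_subsystem (Phi Psi : seq V) : Prop :=
  root_subsystem Phi Psi /\ closed_subset Phi Psi.

End RootSystems.

(* If x_lam = infinity for a positive root lam in the span of Fin, write
   lam = sum_(l in Fin) f_l l; the linear relation x_lam - sum f_l x_l then
   has lam as its only coordinate at infinity, so its homogenization does not
   vanish at x.  Hence the positive roots in the span of Fin are exactly Fin,
   i.e. Fin u -Fin is the intersection of Phi with a subspace, and such an
   intersection is always a closed root subsystem. *)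
From HB Require Import structures.
From mathcomp Require Import all_boot all_order all_algebra.
Set Implicit Arguments. Unset Strict Implicit. Unset Printing Implicit Defensive.
Import Order.TTheory GRing.Theory Num.Theory.
Local Open Scope ring_scope.

Lemma span_coefs (K : fieldType) (vT : vectType K) (X : seq vT) v :
  uniq X -> v \in <<X>>%VS -> exists k : vT -> K, v = \sum_(u <- X) k u *: u.
Proof.
rewrite -{2}[X]in_tupleE => uX /coord_span def_v.
exists (fun u => oapp (fun i => coord (in_tuple X) i v) 0 (insub (index u X))).
rewrite (big_nth 0) big_mkord {1}def_v; apply: eq_bigr => i _.
by rewrite index_uniq // valK.
Qed.

Section ClosedRootSubsystem.
Variables (C : numClosedFieldType) (r : nat).
Implicit Types (Phi Phip Psi : seq 'rV[C]_r) (x : 'rV[C]_r -> C * C).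

Lemma homog_eval_neq0 Phip (c : 'rV[C]_r -> C) x lam :
  uniq Phip -> is_P1_point Phip x -> lam \in Phip -> c lam != 0 ->
  (x lam).1 = 0 ->
  (forall l, l \in Phip -> c l != 0 -> l != lam -> (x l).1 != 0) ->
  homog_eval Phip c x != 0.
Proof.
move=> uP Px lamP clam xlam finite_else.
rewrite /homog_eval big_mkcond (bigD1_seq lam) //= clam.
rewrite [X in _ + X]big1_seq ?addr0 => [|l /andP[lnl _]]; last first.
  case: ifP => // cl; apply/eqP; rewrite mulf_eq0 prodf_seq_eq0; apply/orP.
  by right; apply/hasP; exists lam; rewrite // clam eq_sym lnl xlam eqxx.
have xlam2 : (x lam).2 != 0.
  move: (Px lam lamP); case: (x lam) xlam => a b /= ->.
  by apply: contra => /eqP ->.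
rewrite !mulf_neq0 // prodf_seq_neq0; apply/allP => m mP; apply/implyP.
by case/andP=> cm mnl; apply: finite_else.
Qed.

Lemma Fin_span_finite Phip x lam :
  uniq Phip -> in_Z Phip x -> lam \in Phip -> lam \in <<Fin Phip x>>%VS ->
  (x lam).1 != 0.
Proof.
move=> uP [Px hZ] lamP /(span_coefs (filter_uniq _ uP))[f def_lam].
apply/negP => /eqP xlam.
pose c l := if (x l).1 != 0 then - f l else (l == lam)%:R.
have clam : c lam = 1 by rewrite /c xlam !eqxx.
have rel_c : is_relation Phip c.
  rewrite /is_relation (bigID (fun l => (x l).1 != 0)) /=.
  have -> : \sum_(l <- Phip | (x l).1 != 0) c l *: l = - lam.
    rewrite def_lam /Fin big_filter -sumrN.
    by apply: eq_bigr => l xl; rewrite /c xl scaleNr.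
  rewrite -big_filter (bigD1_seq lam) ?filter_uniq ?mem_filter ?xlam ?eqxx //=.
  rewrite clam scale1r big1_seq ?addr0 ?addNr // => l /andP[lnl].
  by rewrite mem_filter /c => /andP[/negPf -> _]; rewrite (negPf lnl) scale0r.
have finite_else l : l \in Phip -> c l != 0 -> l != lam -> (x l).1 != 0.
  by rewrite /c; case: ifP => // _ _ /[swap] /negPf ->; rewrite eqxx.
have := homog_eval_neq0 uP Px lamP _ xlam finite_else.
by rewrite clam oner_eq0 hZ // eqxx => /(_ isT).
Qed.

Lemma root_opp Phi a : is_root_system Phi -> a \in Phi -> - a \in Phi.
Proof.
case=> _ _ hcor _ aP; have [c [[ac2 refl_c] _]] := hcor a aP.
by have := refl_c a aP; rewrite ac2 scaler_nat mulr2n opprD addrA subrr add0r.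
Qed.

Lemma positive_sub_root Phi Phip : is_positive_system Phi Phip ->
  {subset Phip <= Phi}.
Proof. by case=> Delta [_ _ _ hPhip] b /hPhip[]. Qed.

Lemma root_positive_or_negative Phi Phip b :
  is_root_system Phi -> is_positive_system Phi Phip -> b \in Phi ->
  b \in Phip \/ - b \in Phip.
Proof.
move=> RPhi [Delta [_ _ hdec hPhip]] bP.
have [n [def_b|def_b]] := hdec b bP.
  by left; apply/hPhip; split=> //; exists n.
right; apply/hPhip; split; first exact: root_opp.
by exists n; rewrite def_b opprK.
Qed.

Lemma closed_root_subsystem_vspace Phi Psi (U : {vspace 'rV[C]_r}) :
  (forall b, (b \in Psi) = (b \in Phi) && (b \in U)) ->
  closed_root_subsystem Phi Psi.
Proof.
move=> memPsi; split; last first.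
  move=> a b; rewrite !memPsi => /andP[_ aU] /andP[_ bU] abP.
  by rewrite abP rpredD.
split=> [b|a c]; first by rewrite memPsi => /andP[].
rewrite memPsi => /andP[_ aU] [_ refl_c] b; rewrite !memPsi => /andP[bP bU].
by rewrite refl_c // rpredB // rpredZ.
Qed.

Lemma mem_Fin_sym Phi Phip x b :
  is_root_system Phi -> is_positive_system Phi Phip -> uniq Phip ->
  in_Z Phip x ->
  (b \in Fin Phip x ++ map -%R (Fin Phip x)) =
  (b \in Phi) && (b \in <<Fin Phip x>>%VS).
Proof.
move=> RPhi PPhip uP xZ; have PpP := positive_sub_root PPhip.
have memFin a : (a \in Fin Phip x) = (a \in Phip) && (a \in <<Fin Phip x>>%VS).
  apply/idP/andP=> [aF|[aP aU]].
    by split; [move: aF; rewrite mem_filter => /andP[] | exact: memv_span].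
  by rewrite mem_filter aP (Fin_span_finite uP xZ).
rewrite mem_cat -{2}(opprK b) mem_map; last exact: oppr_inj.
rewrite !memFin rpredN; apply/idP/andP=> [/orP[]/andP[]|[bP bU]].
- by move=> /PpP.
- by move=> /PpP /(root_opp RPhi); rewrite opprK.
by rewrite bU !andbT; apply/orP; apply: root_positive_or_negative RPhi PPhip bP.
Qed.

End ClosedRootSubsystem.

Theorem mainTheorem2 (C : numClosedFieldType) (r : nat)
    (Phi Phip : seq 'rV[C]_r) (x : 'rV[C]_r -> C * C) :
  is_root_system Phi -> is_positive_system Phi Phip -> uniq Phip ->
  in_Z Phip x ->
  closed_root_subsystem Phi (Fin Phip x ++ map -%R (Fin Phip x)).
Proof.
move=> RPhi PPhip uP xZ; apply: closed_root_subsystem_vspace => b.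
exact: mem_Fin_sym.
Qed.
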